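(* Let $\Lambda$ be a finite cubical complex, $q\ge2$ an integer, $k\ge1$, and $p_{\mathbf{c}}\in(0,1)$ for $\mathbf{c}\in\Lambda_k$. Then, as functions of the $k$-spanning subcomplex $\omega$, $$\Big(\prod_{\mathbf{c}\in\Lambda_k(\omega)}\frac{p_{\mathbf{c}}}{1-p_{\mathbf{c}}}\Big)\frac{|\ker(d^\omega_k)|}{|\mathrm{Im}(d^\omega_{k-1})|}\ \propto\ \Big(\prod_{\mathbf{c}\in\Lambda_k(\omega)}\frac{p_{\mathbf{c}}}{1-p_{\mathbf{c}}}\Big)\frac{|\ker(\partial^\omega_{k-1})|}{|\mathrm{Im}(\partial^\omega_k)|};$$ that is, the plaquette random-cluster model defined with the cohomological weights on the left coincides with the one defined by the weights on the right.
   Context: $\Lambda$ consists of finite sets $\Lambda_j$ of $j$-cells (copies of $\{0,1\}^j$) closed under taking faces $F_i^\pm$; $j$-cells carry two orientations (standard cubical conventions: ordering of edges at a root vertex modulo even permutations, faces inheriting the ordering with $e_i$ removed). $C_j=\{\sigma\in(\mathbb{Z}/q\mathbb{Z})^{\mathcal{O}(\Lambda_j)}\mid\sigma_{-\mathfrak{c}}=-\sigma_{\mathfrak{c}}\}$, $C_0=(\mathbb{Z}/q\mathbb{Z})^{\Lambda_0}$; $\partial_j\mathbf{1}^{\mathfrak{c}}=\sum_{i=1}^j(-1)^{i+1}(\mathbf{1}^{F_i^+(\mathfrak{c})}-\mathbf{1}^{F_i^-(\mathfrak{c})})$ ($j\ge2$), $\partial_1\mathbf{1}^{(v,w)}=\mathbf{1}_w-\mathbf{1}_v$,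 $\partial_0:=0$. Bilinear form $\langle\sigma,\sigma'\rangle=\sum_{\mathbf{c}\in\Lambda_j}\sigma_{\mathfrak{c}}\sigma'_{\mathfrak{c}}$; $d_j:C_{j-1}\to C_j$ is the adjoint of $\partial_j$ (and $d_0:=0$). A $k$-spanning subcomplex $\omega$ contains all cells of dimension $<k$, a set $\Lambda_k(\omega)\subset\Lambda_k$ of $k$-cells and no higher cells. The induced maps on $\omega$: $\partial^\omega_k$ is the restriction of $\partial_k$ to chains supported on $\Lambda_k(\omega)$, $d^\omega_k:C_{k-1}\to C_k(\omega)$ its adjoint (i.e. $d_k$ followed by restriction to $\Lambda_k(\omega)$), and $\partial^\omega_{k-1}=\partial_{k-1}$, $d^\omega_{k-1}=d_{k-1}$. *)

From HB Require Import structures.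
From mathcomp Require Import all_boot all_order all_algebra.
Set Implicit Arguments. Unset Strict Implicit. Unset Printing Implicit Defensive.
Import Order.TTheory GRing.Theory Num.Theory.
Local Open Scope ring_scope.

(* A finite cubical complex: finite sets cell j of j-cells, with face maps
   F_i^{+/-} : cell j.+1 -> cell j (i is 0-indexed here: i = 0..j stands for
   the paper's i = 1..j+1; the boolean is the sign, true = +), satisfying the
   cubical identities, and with no cells above some dimension. *)
Record cubical_complex := CubicalComplex {
  cell : nat -> finType;
  face : forall n, 'I_n.+1 -> bool -> cell n.+1 -> cell n;
  face_comm : forall n (i : 'I_n.+1) (j : 'I_n.+2) (a b : bool) (x : cell n.+2),
    (i < j)%N ->
    face i a (face j b x) = face (inord j.-1) b (face (widen_ord (leqnSn _) i) a x);
  fin_dim : exists N, forall j, (N < j)%N -> #|cell j| = 0%N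
}.

Section Chains.
Variables (L : cubical_complex) (q : nat).

(* j-chains with coefficients in Z/qZ.  An antisymmetric function on oriented
   j-cells is identified with its values on the reference (positive)
   orientation of each cell. *)
Definition chain (j : nat) := {ffun cell L j -> 'Z_q}.

Definition delta (j : nat) (c : cell L j) : chain j := [ffun c' => (c' == c)%:R].

Definition pairing (j : nat) (s t : chain j) : 'Z_q := \sum_c s c * t c.

(* boundary of an elementary (positively oriented) (m+1)-cell:
   sum_{i=1}^{m+1} (-1)^(i+1) (1^{F_i^+ c} - 1^{F_i^- c}) *)
Definition bd_cell (m : nat) (c : cell L m.+1) : chain m :=
  [ffun c' => \sum_(i < m.+1) (-1) ^+ i *
       ((face i true c == c')%:R - (face i false c == c')%:R)].

Definition bd (m : nat) (s : chain m.+1) : chain m :=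
  [ffun c' => \sum_c s c * bd_cell c c'].

Definition bdry (j : nat) : chain j -> chain j.-1 :=
  match j return chain j -> chain j.-1 with
  | 0 => fun _ => 0
  | m.+1 => @bd m
  end.

Definition cobd (j : nat) (t : chain j.-1) : chain j :=
  [ffun c => pairing t (@bdry j (delta c))].

(* omega is a k-spanning subcomplex, determined by w = Lambda_k(omega). *)

(* ker d^omega_k : d_k followed by restriction to w *)
Definition ker_cobd_om (k : nat) (w : {set cell L k}) : {set chain k.-1} :=
  [set t : chain k.-1 | [forall c in w, @cobd k t c == 0]].

(* Im d^omega_{k-1} = Im d_{k-1} *)
Definition im_cobd (j : nat) : {set chain j} :=
  [set @cobd j t | t in [set: chain j.-1]].

(* ker partial^omega_{k-1} = ker partial_{k-1} *)
Definition ker_bdry (j : nat) : {set chain j} :=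
  [set s : chain j | @bdry j s == 0].

Definition im_bdry_om (k : nat) (w : {set cell L k}) : {set chain k.-1} :=
  [set @bdry k s | s in [set s : chain k | [forall c, (c \notin w) ==> (s c == 0)]]].

End Chains.

Definition cluster_weight (R : realFieldType) (L : cubical_complex) (k : nat)
  (p : cell L k -> R) (w : {set cell L k}) : R :=
  \prod_(c in w) (p c / (1 - p c)).

From HB Require Import structures.
From mathcomp Require Import all_boot all_order all_algebra.
From mathcomp Require Import algC cyclotomic.
Set Implicit Arguments. Unset Strict Implicit. Unset Printing Implicit Defensive.
Import Order.TTheory GRing.Theory Num.Theory.
Local Open Scope ring_scope.

(* For a subgroup H of (Z/qZ)^n one has |H| |H^perp| = q^n: summing the
   character z^(t.h) (z a primitive q-th root of unity) over t and h in H
   counts |H^perp| |H| one way and q^n the other way.  As d is the adjoint of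
   the boundary, ker d^omega_k = (Im partial^omega_k)^perp and
   ker partial_{k-1} = (Im d_{k-1})^perp, so both ratios of the statement equal
   q^|Lambda_{k-1}| / (|Im partial^omega_k| |Im d_{k-1}|): the two weights
   agree, the proportionality constant is 1. *)

(* MathComp registers the finType and zmodType structures of {ffun I -> V}
   but not their join. *)
HB.instance Definition _ (I : finType) (V : finZmodType) :=
  GRing.Zmodule.on {ffun I -> V}.

Section Orthogonality.
Variables (q : nat) (I : finType).
Local Notation vec := {ffun I -> 'Z_q}.

Definition dotz (s t : vec) : 'Z_q := \sum_i s i * t i.

Definition orthz (H : {set vec}) : {set vec} :=
  [set t : vec | [forall h in H, dotz t h == 0]].

Definition ffdelta (c : I) : vec := [ffun i => (i == c)%:R].

Definition supported_on (w : {set I}) : {set vec} :=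
  [set s : vec | [forall c, (c \notin w) ==> (s c == 0)]].

Lemma dotzC s t : dotz s t = dotz t s.
Proof. by apply: eq_bigr => i _; rewrite mulrC. Qed.

Lemma dotzDl s s' t : dotz (s + s') t = dotz s t + dotz s' t.
Proof.
by rewrite /dotz -big_split; apply: eq_bigr => i _; rewrite ffunE mulrDl.
Qed.

Lemma dotzDr s t t' : dotz s (t + t') = dotz s t + dotz s t'.
Proof. by rewrite dotzC dotzDl !(dotzC _ s). Qed.

Lemma dotzBl s s' t : dotz (s - s') t = dotz s t - dotz s' t.
Proof.
by rewrite /dotz -sumrB; apply: eq_bigr => i _; rewrite !ffunE mulrBl.
Qed.

Lemma dotz0r s : dotz s 0 = 0.
Proof. by rewrite /dotz big1 // => i _; rewrite ffunE mulr0. Qed.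

Lemma dotz_delta s c : dotz s (ffdelta c) = s c.
Proof.
rewrite /dotz (bigD1 c) //= big1 => [|i /negbTE ic].
  by rewrite ffunE eqxx mulr1 addr0.
by rewrite ffunE ic mulr0.
Qed.

Lemma orthz_supported_on w t :
  (t \in orthz (supported_on w)) = [forall c in w, t c == 0].
Proof.
rewrite inE; apply/forallP/forallP => [orth_t c | t_w s]; apply/implyP.
  move=> cw; rewrite -dotz_delta; have /implyP := orth_t (ffdelta c); apply.
  rewrite inE; apply/forallP => c'; rewrite ffunE.
  by case: (c' =P c) => [-> | _]; rewrite ?cw ?implybT.
rewrite inE => /forallP s_w; rewrite /dotz big1 // => c _.
case cw: (c \in w).
  by move/implyP/(_ cw)/eqP: (t_w c) ->; rewrite mul0r.
by move/implyP: (s_w c); rewrite cw => /(_ isT)/eqP ->; rewrite mulr0.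
Qed.

Lemma supported_onT : supported_on setT = setT.
Proof. by apply/setP => s; rewrite !inE; apply/forallP => c; rewrite inE. Qed.

Lemma orthzT t : (t \in orthz setT) = (t == 0).
Proof.
rewrite -supported_onT orthz_supported_on; apply/forallP/eqP => [t0 | -> c].
  by apply/ffunP => c; apply/eqP; rewrite ffunE; apply: implyP (t0 c) _.
by rewrite ffunE eqxx implybT.
Qed.

Lemma zmod_closed_supported_on w : zmod_closed (supported_on w).
Proof.
split=> [|s t]; rewrite !inE.
  by apply/forallP => c; rewrite ffunE eqxx implybT.
move=> /forallP s_w /forallP t_w; apply/forallP => c; rewrite !ffunE.
apply/implyP => cw.
by rewrite (eqP (implyP (s_w c) cw)) (eqP (implyP (t_w c) cw)) subrr.
Qed.

End Orthogonality.

Lemma orthz_imset (q : nat) (I J : finType)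
    (f : {ffun I -> 'Z_q} -> {ffun J -> 'Z_q})
    (g : {ffun J -> 'Z_q} -> {ffun I -> 'Z_q}) (A : {set {ffun I -> 'Z_q}}) t :
  (forall s, dotz t (f s) = dotz (g t) s) ->
  (t \in orthz (f @: A)) = (g t \in orthz A).
Proof.
move=> adj; rewrite !inE; apply/forallP/forallP => orth_t a; apply/implyP.
  by move=> aA; rewrite -adj; apply: (implyP (orth_t _)); apply: imset_f.
by case/imsetP=> s sA ->; rewrite adj; apply: (implyP (orth_t s)).
Qed.

Lemma zmod_closed_imset (U V : finZmodType) (f : U -> V) (A : {set U}) :
  {morph f : x y / x - y} -> zmod_closed A -> zmod_closed (f @: A).
Proof.
move=> fB [A0 AB]; have f0 : f 0 = 0 by rewrite -(subrr 0) fB subrr.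
split; first by rewrite -f0 imset_f.
by move=> _ _ /imsetP [x xA ->] /imsetP [y yA ->]; rewrite -fB imset_f ?AB.
Qed.

Lemma sumr_shift_scale_eq0 (R : idomainType) (T : finType) (A : {pred T})
    (s : T -> T) (f : T -> R) c :
  injective s -> (forall x, (s x \in A) = (x \in A)) ->
  (forall x, f (s x) = f x * c) -> c != 1 -> \sum_(x in A) f x = 0.
Proof.
move=> s_inj A_s f_s c_neq1.
have sum_fixed : \sum_(x in A) f x = (\sum_(x in A) f x) * c.
  rewrite {1}(reindex_inj s_inj) /= mulr_suml.
  by apply: eq_big => [x | x _]; rewrite ?A_s ?f_s.
apply/eqP; move: sum_fixed => /eqP.
rewrite -subr_eq0 -{1}[X in X - _]mulr1 -mulrBr mulf_eq0 subr_eq0.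
by rewrite (eq_sym 1) (negbTE c_neq1) orbF.
Qed.

Section CharacterSums.
Variables (q : nat) (I : finType) (z : algC).
Hypotheses (q_gt1 : (1 < q)%N) (z_prim : q.-primitive_root z).

Definition zq_char (a : 'Z_q) : algC := z ^+ a.

Lemma zq_charD : {morph zq_char : a b / a + b >-> a * b}.
Proof.
have modZp n : (n %% (Zp_trunc q).+2 = n %% q)%N by rewrite Zp_cast.
move=> a b; rewrite /zq_char -exprD /= modZp.
exact: expr_mod (prim_expr_order z_prim).
Qed.

Lemma zq_char0 : zq_char 0 = 1.
Proof. exact: expr0. Qed.

Lemma zq_char_eq1 a : (zq_char a == 1) = (a == 0).
Proof.
rewrite /zq_char -(prim_order_dvd z_prim) /dvdn modn_small -?val_eqE //.
by rewrite -[q in (_ < q)%N](Zp_cast q_gt1).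
Qed.

Local Notation vec := {ffun I -> 'Z_q}.

Lemma sum_char_dot_orthz (H : {set vec}) t : zmod_closed H ->
  \sum_(h in H) zq_char (dotz t h) = (t \in orthz H)%:R * #|H|%:R.
Proof.
move=> H_zmod; have [H0 HB] := H_zmod.
have [orth_t | ] := boolP (t \in orthz H).
  rewrite mul1r -sum1_card natr_sum; apply: eq_bigr => h Hh.
  by move: orth_t; rewrite inE => /forallP /(_ h) /implyP /(_ Hh) /eqP ->.
rewrite mul0r inE => /forallPn [h0]; rewrite negb_imply => /andP [Hh0 dot_neq0].
apply: (sumr_shift_scale_eq0 (c := zq_char (dotz t h0)) (addIr h0)).
- move=> x; apply/idP/idP => [xh0H | xH]; first by rewrite -(addrK h0 x) HB.
  by have := HB _ _ xH (HB _ _ H0 Hh0); rewrite sub0r opprK.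
- by move=> x; rewrite dotzDr zq_charD.
- by rewrite zq_char_eq1.
Qed.

Lemma sum_char_dot h :
  \sum_(t : vec) zq_char (dotz t h) = (h == 0)%:R * #|vec|%:R.
Proof.
have [-> | h_neq0] := eqVneq h 0.
  rewrite mul1r -sum1_card natr_sum; apply: eq_bigr => t _.
  by rewrite dotz0r zq_char0.
have [i hi_neq0] : exists i, h i != 0.
  apply/existsP; apply: contraNT h_neq0 => /existsPn hi0.
  by apply/eqP/ffunP => i; rewrite ffunE; apply/eqP/negbNE.
rewrite mul0r.
rewrite (sumr_shift_scale_eq0 (c := zq_char (h i)) (addIr (ffdelta q i))) //.
- by move=> t; rewrite dotzDl zq_charD [dotz (ffdelta _ _) _]dotzC dotz_delta.
- by rewrite zq_char_eq1.
Qed.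

Lemma card_orthz_char (H : {set vec}) : zmod_closed H ->
  (#|H| * #|orthz H| = #|vec|)%N.
Proof.
move=> H_zmod; apply/eqP; rewrite -(@eqr_nat algC) natrM.
pose S := \sum_(t : vec) \sum_(h in H) zq_char (dotz t h).
have S_orthz : S = #|orthz H|%:R * #|H|%:R.
  rewrite /S; under eq_bigr do rewrite sum_char_dot_orthz //.
  rewrite -big_distrl /=; congr (_ * _).
  rewrite -sum1_card natr_sum [RHS]big_mkcond /=.
  by apply: eq_bigr => t _; case: (t \in orthz H).
have S_vec : S = #|vec|%:R.
  rewrite /S exchange_big /= (bigD1 _ H_zmod.1) /=.
  rewrite [X in _ + X]big1 => [|h /andP [_ h_neq0]].
    by rewrite sum_char_dot eqxx mul1r addr0.
  by rewrite sum_char_dot (negbTE h_neq0) mul0r.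
by rewrite -S_vec S_orthz mulrC.
Qed.

End CharacterSums.

Lemma card_orthz (q : nat) (I : finType) (H : {set {ffun I -> 'Z_q}}) :
  (1 < q)%N -> zmod_closed H -> (#|H| * #|orthz H| = #|{ffun I -> 'Z_q}|)%N.
Proof.
move=> q_gt1; have [z z_prim] := C_prim_root_exists (ltnW q_gt1).
exact: (card_orthz_char q_gt1 z_prim).
Qed.

Section CubicalChains.
Variables (L : cubical_complex) (q : nat).

Lemma bdryE j (s : chain L q j) x : bdry s x = \sum_c s c * bdry (delta q c) x.
Proof.
case: j s x => [|m] s x /=.
  by rewrite ffunE big1 // => c _; rewrite mulr0.
rewrite ffunE; apply: eq_bigr => c _; congr (_ * _).
rewrite [RHS]ffunE (bigD1 c) //= big1 => [|c' /negbTE c'c].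
  by rewrite [X in X * _]ffunE eqxx mul1r addr0.
by rewrite [X in X * _]ffunE c'c mul0r.
Qed.

Lemma bdryB j : {morph @bdry L q j : s s' / s - s'}.
Proof.
move=> s s'; apply/ffunP => x; rewrite !ffunE !bdryE -sumrB.
by apply: eq_bigr => c _; rewrite !ffunE mulrBl.
Qed.

Lemma cobdB j : {morph @cobd L q j : t t' / t - t'}.
Proof. by move=> t t'; apply/ffunP => c; rewrite !ffunE [LHS]dotzBl. Qed.

Lemma dotz_bdry j (t : chain L q j.-1) (s : chain L q j) :
  dotz t (bdry s) = dotz (cobd t) s.
Proof.
rewrite /dotz; under eq_bigr do rewrite bdryE mulr_sumr.
rewrite exchange_big /=; apply: eq_bigr => c _; rewrite ffunE mulr_suml.
by apply: eq_bigr => x _; rewrite mulrCA mulrC.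
Qed.

Lemma ker_cobd_omE k (w : {set cell L k}) :
  ker_cobd_om q w = orthz (im_bdry_om q w).
Proof.
have -> : im_bdry_om q w = @bdry L q k @: supported_on q w by [].
apply/setP => t.
by rewrite (orthz_imset _ (dotz_bdry t)) orthz_supported_on inE.
Qed.

Lemma ker_bdryE j : ker_bdry L q j = orthz (im_cobd L q j).
Proof.
apply/setP => s; rewrite (orthz_imset _ (g := @bdry L q j)) ?orthzT ?inE //.
move=> t.
by rewrite dotzC -dotz_bdry dotzC.
Qed.

Lemma zmod_closed_im_bdry_om k (w : {set cell L k}) :
  zmod_closed (im_bdry_om q w).
Proof. exact: zmod_closed_imset (@bdryB k) (zmod_closed_supported_on q w). Qed.

Lemma zmod_closed_im_cobd j : zmod_closed (im_cobd L q j).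
Proof.
apply: zmod_closed_imset (@cobdB j) _.
by split=> [|t t' _ _]; rewrite inE.
Qed.

End CubicalChains.

Lemma card_ker_im_ratio (R : numFieldType) (L : cubical_complex) (q k : nat)
    (w : {set cell L k}) : (1 < q)%N ->
  #|ker_cobd_om q w|%:R / #|im_cobd L q k.-1|%:R
    = #|ker_bdry L q k.-1|%:R / #|im_bdry_om q w|%:R :> R.
Proof.
move=> q_gt1.
have card_neq0 (H : {set chain L q k.-1}) : zmod_closed H -> #|H|%:R != 0 :> R.
  by case=> H0 _; rewrite pnatr_eq0 -lt0n; apply/card_gt0P; exists 0.
have im_bdry_zmod := zmod_closed_im_bdry_om q w.
have im_cobd_zmod := zmod_closed_im_cobd L q k.-1.
have im_bdry_ker := card_orthz q_gt1 im_bdry_zmod.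
have im_cobd_ker := card_orthz q_gt1 im_cobd_zmod.
rewrite -ker_cobd_omE in im_bdry_ker; rewrite -ker_bdryE in im_cobd_ker.
apply/eqP; rewrite eqr_div ?card_neq0 //.
by rewrite -!natrM eqr_nat mulnC im_bdry_ker mulnC im_cobd_ker.
Qed.

Theorem lemmaC3 (R : realFieldType) (L : cubical_complex) (q k : nat)
  (hq : (1 < q)%N) (hk : (0 < k)%N) (p : cell L k -> R)
  (hp : forall c, 0 < p c < 1) :
  exists K : R, 0 < K /\
    forall w : {set cell L k},
      cluster_weight p w *
        (#|ker_cobd_om q w|%:R / #|im_cobd L q k.-1|%:R)
      = K * (cluster_weight p w *
        (#|ker_bdry L q k.-1|%:R / #|im_bdry_om q w|%:R)).
Proof.
exists 1; split=> [|w]; first exact: ltr01.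
by rewrite mul1r card_ker_im_ratio.
Qed.
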